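(* Let $M$ be a timelike surface in $\mathbb{R}^{n,1}$ with a canonical null direction with respect to a constant unit spacelike vector $Z$, and let $W$ and $a$ be as below. Then $$\Delta a=-2Ka-2\,W(K),$$ where $K$ is the Gaussian curvature of $M$. In particular, if $K\equiv0$ then $a$ is harmonic.
   Context: $\mathbb{R}^{n,1}$ is $\mathbb{R}^{n+1}$ with the metric $-dx_1^2+dx_2^2+\dots+dx_{n+1}^2$. A surface is timelike if the induced metric has signature $(1,1)$; a vector $v$ is lightlike if $v\ne0$ and $\langle v,v\rangle=0$. For a constant vector $Z$, $Z=Z^\top+Z^\perp$ along $M$; $M$ has a canonical null direction with respect to $Z$ if $Z^\top$ is lightlike everywhere on $M$. $W$ is the unique lightlike tangent field with $\langle Z^\top,W\rangle=-1$, and $a:=\langle II(W,W),Z^\perp\rangle$ with $II$ the second fundamental form. $\Delta$ is the trace of the Hessian with respect to the induced Lorentzian metric. *)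

(* Local-coordinate formalization of a timelike
   surface in R^{n,1}: a smooth parametrization f : U (open in R^2) -> R^{n+1}. *)
From Stdlib Require Import Reals List.
From Coquelicot Require Import Coquelicot.
Open Scope R_scope.

Definition sumR (F : nat -> R) (m : nat) : R :=
  fold_right Rplus 0 (map F (seq 0 m)).
(* sum over the two coordinate directions: false = 1st, true = 2nd *)
Definition sumB (F : bool -> R) : R := F false + F true.

(* vectors of R^{n+1} are functions nat -> R, coordinates 0..n;
   coordinate 0 is the timelike one *)
Definition mink (n : nat) (x y : nat -> R) : R :=
  - x 0%nat * y 0%nat + sumR (fun i => x (S i) * y (S i)) n.

Definition pd (b : bool) (g : R -> R -> R) : R -> R -> R :=
  if b then (fun u v => Derive (fun t => g u t) v)
  else (fun u v => Derive (fun t => g t v) u).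

Definition pdl (s : list bool) (g : R -> R -> R) : R -> R -> R :=
  fold_right pd g s.

Definition openU (U : R -> R -> Prop) : Prop :=
  open (fun p : R * R => U (fst p) (snd p)).

Definition smooth_on (U : R -> R -> Prop) (g : R -> R -> R) : Prop :=
  forall (s : list bool) (u v : R), U u v ->
    ex_derive (fun t => pdl s g t v) u /\
    ex_derive (fun t => pdl s g u t) v /\
    continuous (fun p : R * R => pdl s g (fst p) (snd p)) (u, v).

Section Surf.
Variable n : nat.
Variable f : nat -> R -> R -> R.   (* component i of the parametrization *)

Definition fd (b : bool) (u v : R) : nat -> R := fun i => pd b (f i) u v.
Definition fdd (b c : bool) (u v : R) : nat -> R := fun i => pd c (pd b (f i)) u v.

Definition gm (b c : bool) (u v : R) : R := mink n (fd b u v) (fd c u v).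
Definition detg (u v : R) : R :=
  gm false false u v * gm true true u v - gm false true u v * gm true false u v.
Definition ginv (b c : bool) (u v : R) : R :=
  match b, c with
  | false, false => gm true true u v / detg u v
  | true, true => gm false false u v / detg u v
  | false, true => - gm false true u v / detg u v
  | true, false => - gm true false u v / detg u v
  end.

Definition tanpart (X : nat -> R) (u v : R) : nat -> R :=
  fun i => sumB (fun b => sumB (fun c =>
             ginv b c u v * mink n X (fd c u v) * fd b u v i)).
Definition normpart (X : nat -> R) (u v : R) : nat -> R :=
  fun i => X i - tanpart X u v i.

Definition II (b c : bool) (u v : R) : nat -> R := normpart (fdd b c u v) u v.

(* Christoffel symbols Gamma^k_{ij} of the induced metric *)
Definition chris (k i j : bool) (u v : R) : R :=
  / 2 * sumB (fun l => ginv k l u v *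
      (pd i (gm j l) u v + pd j (gm i l) u v - pd l (gm i j) u v)).

(* R(d1,d2)d2 = Rvec^l d_l, with R(X,Y)Z = nabla_X nabla_Y Z - nabla_Y nabla_X Z - nabla_[X,Y] Z *)
Definition Rvec (l : bool) (u v : R) : R :=
  pd false (chris l true true) u v - pd true (chris l false true) u v
  + sumB (fun k => chris k true true u v * chris l false k u v
                   - chris k false true u v * chris l true k u v).

(* Gaussian (sectional) curvature K = <R(d1,d2)d2,d1> / (g11 g22 - g12^2) *)
Definition gaussK (u v : R) : R :=
  sumB (fun l => gm false l u v * Rvec l u v) / detg u v.

Definition lap (h : R -> R -> R) (u v : R) : R :=
  sumB (fun i => sumB (fun j => ginv i j u v *
     (pd j (pd i h) u v - sumB (fun k => chris k i j u v * pd k h u v)))).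

Definition tvec (w : bool -> R -> R -> R) (u v : R) : nat -> R :=
  fun i => sumB (fun b => w b u v * fd b u v i).

End Surf.

From Stdlib Require Import Reals List Lra Lia Nsatz.
From Coquelicot Require Import Coquelicot.
Open Scope R_scope.

(* The height function h = <Z, f> has gradient Z^T and Hessian <II, Z^perp>.  Since
   |grad h|^2 = <Z^T, Z^T> vanishes identically, differentiating it shows that Z^T lies in
   the kernel of Hess h; in dimension two this forces Hess h = A dh (x) dh, and dh(W) = -1
   gives a = A.  Commuting third derivatives of h (the Ricci identity) expresses the
   curvature through dA, namely K = Z^T(a).  In the null frame (Z^T, W) the inverse metric
   is -(Z^T (x) W + W (x) Z^T), and differentiating K = Z^T(a) once more along W turns the
   Laplacian of a into -2 K a - 2 W(K). *)

(** * The Minkowski form *)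

Definition fsum (l : list nat) (F : nat -> R) : R := fold_right Rplus 0 (map F l).

Lemma fsum_ext l F G : (forall i, In i l -> F i = G i) -> fsum l F = fsum l G.
Proof.
  induction l as [|i l IHl]; intros E; unfold fsum in *; simpl; auto.
  rewrite E by (simpl; auto). rewrite IHl; auto. intros; apply E; simpl; auto.
Qed.

Lemma fsum_lin l a b F G :
  fsum l (fun i => a * F i + b * G i) = a * fsum l F + b * fsum l G.
Proof. induction l; unfold fsum in *; simpl; [ring | rewrite IHl; ring]. Qed.

Lemma fsum_sub l F G : fsum l (fun i => F i - G i) = fsum l F - fsum l G.
Proof. induction l; unfold fsum in *; simpl; [ring | rewrite IHl; ring]. Qed.

Lemma mink_fsum n x y :
  mink n x y = - x 0%nat * y 0%nat + fsum (seq 0 n) (fun i => x (S i) * y (S i)).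
Proof. reflexivity. Qed.

Lemma mink_ext n x x' y y' :
  (forall i, (i <= n)%nat -> x i = x' i) -> (forall i, (i <= n)%nat -> y i = y' i) ->
  mink n x y = mink n x' y'.
Proof.
  intros Ex Ey. rewrite !mink_fsum, (Ex 0%nat), (Ey 0%nat) by lia. f_equal.
  apply fsum_ext. intros i Hi. apply in_seq in Hi. rewrite Ex, Ey by lia. reflexivity.
Qed.

Lemma mink_sym n x y : mink n x y = mink n y x.
Proof.
  rewrite !mink_fsum, (fsum_ext _ _ (fun i => y (S i) * x (S i))); [ring | intros; ring].
Qed.

Lemma mink_lin n a b x y z :
  mink n (fun i => a * x i + b * y i) z = a * mink n x z + b * mink n y z.
Proof.
  rewrite !mink_fsum.
  rewrite (fsum_ext _ _ (fun i => a * (x (S i) * z (S i)) + b * (y (S i) * z (S i)))).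
  - rewrite fsum_lin. ring.
  - intros; ring.
Qed.

Lemma mink_sub n x y z : mink n (fun i => x i - y i) z = mink n x z - mink n y z.
Proof.
  rewrite !mink_fsum.
  rewrite (fsum_ext _ _ (fun i => x (S i) * z (S i) - y (S i) * z (S i))).
  - rewrite fsum_sub. ring.
  - intros; ring.
Qed.

Lemma mink_0_l n y : mink n (fun _ => 0) y = 0.
Proof.
  rewrite (mink_ext n _ (fun i => 0 * 0 + 0 * 0) y y) by (intros; ring || auto).
  rewrite mink_lin. ring.
Qed.

(** * Algebra of 2 x 2 symmetric forms *)

(* The conclusion says [H = (tr H / |h|^2) h (x) h]. *)
Lemma sym2_kernel_rank_one z1 z2 h1 h2 H11 H12 H22 :
  z1 * H11 + z2 * H12 = 0 -> z1 * H12 + z2 * H22 = 0 -> z1 * h1 + z2 * h2 = 0 ->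
  (z1 <> 0 \/ z2 <> 0) ->
  H11 * (h1 * h1 + h2 * h2) = (H11 + H22) * h1 * h1 /\
  H12 * (h1 * h1 + h2 * h2) = (H11 + H22) * h1 * h2 /\
  H22 * (h1 * h1 + h2 * h2) = (H11 + H22) * h2 * h2.
Proof.
  intros E1 E2 E3 Nz.
  assert (Nz2 : z1 * z1 <> 0 \/ z2 * z2 <> 0).
  { destruct Nz; [left | right]; apply Rmult_integral_contrapositive; auto. }
  clear Nz; destruct Nz2 as [Nz2 | Nz2];
    repeat split; refine (Rmult_eq_reg_l _ _ _ _ Nz2); nsatz.
Qed.

(* With [D = det g] and [zeta = g^-1 dh], [D * zeta = (gTT hF - gFT hT, gFF hT - gFT hF)];
   for null [dh <> 0] the vector [zeta] is the Euclidean rotation of [dh] up to a scalar,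
   which turns the two hypotheses into [K = dA(zeta)]. *)
Lemma null_covector_scalar gFF gFT gTT hF hT AF AT K :
  gFF * gTT - gFT * gFT <> 0 ->
  gTT * hF * hF - 2 * gFT * hF * hT + gFF * hT * hT = 0 ->
  (hF <> 0 \/ hT <> 0) ->
  K * (gTT * hF - gFT * hT) = - hT * (hT * AF - hF * AT) ->
  K * (gFT * hF - gFF * hT) = - hF * (hT * AF - hF * AT) ->
  K * (gFF * gTT - gFT * gFT) = (gTT * hF - gFT * hT) * AF + (gFF * hT - gFT * hF) * AT.
Proof.
  intros D Q [N | N] E1 E2.
  - apply (Rmult_eq_reg_r (hF * hF)); [|intro; apply N; nra].
    assert (X1 := f_equal (fun x => x * (gFT * hF - gFF * hT)) E2).
    assert (X2 := f_equal (fun x => x * (K * gFF - hF * AF)) Q).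
    simpl in X1, X2. nra.
  - apply (Rmult_eq_reg_r (hT * hT)); [|intro; apply N; nra].
    assert (X1 := f_equal (fun x => x * (gTT * hF - gFT * hT)) E1).
    assert (X2 := f_equal (fun x => x * (K * gTT - hT * AT)) Q).
    simpl in X1, X2. nra.
Qed.

Lemma cramer2 a b c x y p q : a * c - b * b <> 0 ->
  a * x + b * y = p -> b * x + c * y = q ->
  x = (c * p - b * q) / (a * c - b * b) /\ y = (a * q - b * p) / (a * c - b * b).
Proof.
  intros D E1 E2. split; apply (Rmult_eq_reg_r (a * c - b * b)); auto;
    rewrite <- E1, <- E2; field; auto.
Qed.

Lemma null_frame_inverse_metric gFF gFT gTT iFF iFT iTT hF hT wF wT :
  gFF * iFF + gFT * iFT = 1 -> gFF * iFT + gFT * iTT = 0 ->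
  gFT * iFF + gTT * iFT = 0 -> gFT * iFT + gTT * iTT = 1 ->
  (iFF * hF + iFT * hT) * hF + (iFT * hF + iTT * hT) * hT = 0 ->
  gFF * wF * wF + 2 * gFT * wF * wT + gTT * wT * wT = 0 ->
  wF * hF + wT * hT = -1 ->
  iFF = - 2 * (iFF * hF + iFT * hT) * wF /\
  iFT = - ((iFF * hF + iFT * hT) * wT + wF * (iFT * hF + iTT * hT)) /\
  iTT = - 2 * (iFT * hF + iTT * hT) * wT.
Proof. intros. split; [|split]; nsatz. Qed.

(** * Calculus of smooth functions on an open set of the plane *)

Section Calculus.
Variable U : R -> R -> Prop.
Hypothesis HU : openU U.

Definition eq_on (g1 g2 : R -> R -> R) : Prop := forall u v, U u v -> g1 u v = g2 u v.

Definition ex_pd (b : bool) (g : R -> R -> R) (u v : R) : Prop :=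
  if b then ex_derive (fun t => g u t) v else ex_derive (fun t => g t v) u.

Definition cont_on (g : R -> R -> R) : Prop := forall u v, U u v -> continuity_2d_pt g u v.

Fixpoint Ck (k : nat) (g : R -> R -> R) : Prop :=
  match k with
  | O => cont_on g
  | S k' => cont_on g /\ (forall b u v, U u v -> ex_pd b g u v) /\ (forall b, Ck k' (pd b g))
  end.

Definition Cinf (g : R -> R -> R) : Prop := forall k, Ck k g.

Lemma locally_2d_open u v : U u v -> locally_2d U u v.
Proof.
  intros H. apply locally_2d_locally.
  apply (locally_open (fun p : R * R => U (fst p) (snd p))); auto.
Qed.

Lemma locally_open_fst u v : U u v -> locally u (fun t => U t v).
Proof. intros H. exact (locally_2d_1d_const_y _ _ _ (locally_2d_open u v H)). Qed.

Lemma locally_open_snd u v : U u v -> locally v (fun t => U u t).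
Proof. intros H. exact (locally_2d_1d_const_x _ _ _ (locally_2d_open u v H)). Qed.

Lemma pd_ext b g1 g2 : eq_on g1 g2 -> eq_on (pd b g1) (pd b g2).
Proof.
  intros E u v H. destruct b; simpl; apply Derive_ext_loc.
  - eapply filter_imp; [|apply locally_open_snd; eauto]. auto.
  - eapply filter_imp; [|apply locally_open_fst; eauto]. auto.
Qed.

Lemma ex_pd_ext b g1 g2 u v : eq_on g1 g2 -> U u v -> ex_pd b g1 u v -> ex_pd b g2 u v.
Proof.
  intros E H. destruct b; simpl; apply ex_derive_ext_loc.
  - eapply filter_imp; [|apply locally_open_snd; eauto]. auto.
  - eapply filter_imp; [|apply locally_open_fst; eauto]. auto.
Qed.

Lemma cont_on_ext g1 g2 : eq_on g1 g2 -> cont_on g1 -> cont_on g2.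
Proof.
  intros E C u v H. apply continuity_2d_pt_ext_loc with g1; auto.
  apply locally_2d_impl with U; [|apply locally_2d_open; auto].
  apply locally_2d_forall. auto.
Qed.

Lemma Ck_ext k : forall g1 g2, eq_on g1 g2 -> Ck k g1 -> Ck k g2.
Proof.
  induction k as [|k IHk]; simpl; intros g1 g2 E C.
  - eapply cont_on_ext; eauto.
  - destruct C as [C0 [C1 C2]]. split; [eapply cont_on_ext; eauto | split].
    + intros b u v H. eapply ex_pd_ext; eauto.
    + intros b. eapply IHk; [apply pd_ext, E | auto].
Qed.

Lemma CkS_Ck k : forall g, Ck (S k) g -> Ck k g.
Proof.
  induction k as [|k IHk]; simpl; intros g C; [tauto|].
  destruct C as [C0 [C1 C2]]. repeat split; auto. intros b. apply IHk, C2.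
Qed.

Lemma pd_plus b g1 g2 u v : ex_pd b g1 u v -> ex_pd b g2 u v ->
  pd b (fun u v => g1 u v + g2 u v) u v = pd b g1 u v + pd b g2 u v.
Proof.
  destruct b; simpl; intros;
    [apply (Derive_plus (fun t => g1 u t) (fun t => g2 u t))
    |apply (Derive_plus (fun t => g1 t v) (fun t => g2 t v))]; auto.
Qed.

Lemma pd_minus b g1 g2 u v : ex_pd b g1 u v -> ex_pd b g2 u v ->
  pd b (fun u v => g1 u v - g2 u v) u v = pd b g1 u v - pd b g2 u v.
Proof.
  destruct b; simpl; intros;
    [apply (Derive_minus (fun t => g1 u t) (fun t => g2 u t))
    |apply (Derive_minus (fun t => g1 t v) (fun t => g2 t v))]; auto.
Qed.

Lemma pd_mult b g1 g2 u v : ex_pd b g1 u v -> ex_pd b g2 u v ->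
  pd b (fun u v => g1 u v * g2 u v) u v = pd b g1 u v * g2 u v + g1 u v * pd b g2 u v.
Proof.
  destruct b; simpl; intros;
    [apply (Derive_mult (fun t => g1 u t) (fun t => g2 u t))
    |apply (Derive_mult (fun t => g1 t v) (fun t => g2 t v))]; auto.
Qed.

Lemma pd_opp b g u v : pd b (fun u v => - g u v) u v = - pd b g u v.
Proof. destruct b; simpl; apply Derive_opp. Qed.

Lemma pd_const b c u v : pd b (fun _ _ => c) u v = 0.
Proof. destruct b; simpl; apply Derive_const. Qed.

Lemma pd_inv b g u v : ex_pd b g u v -> g u v <> 0 ->
  pd b (fun u v => / g u v) u v = - pd b g u v / (g u v) ^ 2.
Proof. destruct b; simpl; intros; apply Derive_inv; auto. Qed.

Lemma pd_div b g1 g2 u v : ex_pd b g1 u v -> ex_pd b g2 u v -> g2 u v <> 0 ->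
  pd b (fun u v => g1 u v / g2 u v) u v =
  (pd b g1 u v * g2 u v - g1 u v * pd b g2 u v) / (g2 u v) ^ 2.
Proof.
  destruct b; simpl; intros;
    [apply (Derive_div (fun t => g1 u t) (fun t => g2 u t))
    |apply (Derive_div (fun t => g1 t v) (fun t => g2 t v))]; auto.
Qed.

Lemma ex_pd_plus b g1 g2 u v : ex_pd b g1 u v -> ex_pd b g2 u v ->
  ex_pd b (fun u v => g1 u v + g2 u v) u v.
Proof.
  destruct b; simpl; intros A B;
    [exact (ex_derive_plus (fun t => g1 u t) (fun t => g2 u t) v A B)
    |exact (ex_derive_plus (fun t => g1 t v) (fun t => g2 t v) u A B)].
Qed.

Lemma ex_pd_mult b g1 g2 u v : ex_pd b g1 u v -> ex_pd b g2 u v ->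
  ex_pd b (fun u v => g1 u v * g2 u v) u v.
Proof. destruct b; simpl; intros; apply ex_derive_mult; auto. Qed.

Lemma ex_pd_opp b g u v : ex_pd b g u v -> ex_pd b (fun u v => - g u v) u v.
Proof.
  destruct b; simpl; intros A;
    [exact (ex_derive_opp (fun t => g u t) v A) | exact (ex_derive_opp (fun t => g t v) u A)].
Qed.

Lemma ex_pd_const b c u v : ex_pd b (fun _ _ => c) u v.
Proof. destruct b; simpl; apply ex_derive_const. Qed.

Lemma ex_pd_inv b g u v : ex_pd b g u v -> g u v <> 0 -> ex_pd b (fun u v => / g u v) u v.
Proof. destruct b; simpl; intros; apply ex_derive_inv; auto. Qed.

Lemma Ck_plus k : forall g1 g2, Ck k g1 -> Ck k g2 -> Ck k (fun u v => g1 u v + g2 u v).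
Proof.
  induction k as [|k IHk]; simpl; intros g1 g2 A B.
  - intros u v H. apply continuity_2d_pt_plus; auto.
  - destruct A as [A0 [A1 A2]], B as [B0 [B1 B2]]. split; [|split].
    + intros u v H. apply continuity_2d_pt_plus; auto.
    + intros; apply ex_pd_plus; auto.
    + intros b. apply Ck_ext with (fun u v => pd b g1 u v + pd b g2 u v); auto.
      intros u v H; symmetry; apply pd_plus; auto.
Qed.

Lemma Ck_opp k : forall g, Ck k g -> Ck k (fun u v => - g u v).
Proof.
  induction k as [|k IHk]; simpl; intros g A.
  - intros u v H. apply continuity_2d_pt_opp; auto.
  - destruct A as [A0 [A1 A2]]. split; [|split].
    + intros u v H. apply continuity_2d_pt_opp; auto.
    + intros; apply ex_pd_opp; auto.
    + intros b. apply Ck_ext with (fun u v => - pd b g u v); auto.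
      intros u v H; symmetry; apply pd_opp.
Qed.

Lemma Ck_const k c : Ck k (fun _ _ => c).
Proof.
  revert c; induction k as [|k IHk]; simpl; intros c.
  - intros u v H; apply continuity_2d_pt_const.
  - split; [|split].
    + intros u v H; apply continuity_2d_pt_const.
    + intros; apply ex_pd_const.
    + intros b. apply Ck_ext with (fun _ _ => 0); auto.
      intros u v H; symmetry; apply pd_const.
Qed.

Lemma Ck_mult k : forall g1 g2, Ck k g1 -> Ck k g2 -> Ck k (fun u v => g1 u v * g2 u v).
Proof.
  induction k as [|k IHk]; intros g1 g2 A B.
  - intros u v H. apply continuity_2d_pt_mult; auto.
  - pose proof (CkS_Ck _ _ A) as A'. pose proof (CkS_Ck _ _ B) as B'.
    destruct A as [A0 [A1 A2]], B as [B0 [B1 B2]]. split; [|split].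
    + intros u v H. apply continuity_2d_pt_mult; auto.
    + intros; apply ex_pd_mult; auto.
    + intros b. apply Ck_ext with (fun u v => pd b g1 u v * g2 u v + g1 u v * pd b g2 u v).
      * intros u v H; symmetry; apply pd_mult; auto.
      * apply Ck_plus; apply IHk; auto.
Qed.

Lemma Ck_inv k : forall g, Ck k g -> (forall u v, U u v -> g u v <> 0) ->
  Ck k (fun u v => / g u v).
Proof.
  induction k as [|k IHk]; intros g A N.
  - intros u v H. apply continuity_2d_pt_inv; auto.
  - pose proof (CkS_Ck _ _ A) as A'. destruct A as [A0 [A1 A2]]. split; [|split].
    + intros u v H. apply continuity_2d_pt_inv; auto.
    + intros; apply ex_pd_inv; auto.
    + intros b. apply Ck_ext with (fun u v => - pd b g u v * (/ g u v * / g u v)).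
      * intros u v H. rewrite pd_inv; auto. field. auto.
      * apply Ck_mult; [apply Ck_opp; auto | apply Ck_mult; apply IHk; auto].
Qed.

Lemma Cinf_plus g1 g2 : Cinf g1 -> Cinf g2 -> Cinf (fun u v => g1 u v + g2 u v).
Proof. intros A B k; apply Ck_plus; auto. Qed.

Lemma Cinf_mult g1 g2 : Cinf g1 -> Cinf g2 -> Cinf (fun u v => g1 u v * g2 u v).
Proof. intros A B k; apply Ck_mult; auto. Qed.

Lemma Cinf_opp g : Cinf g -> Cinf (fun u v => - g u v).
Proof. intros A k; apply Ck_opp; auto. Qed.

Lemma Cinf_minus g1 g2 : Cinf g1 -> Cinf g2 -> Cinf (fun u v => g1 u v - g2 u v).
Proof. intros A B. apply (Cinf_plus g1 (fun u v => - g2 u v)); auto. apply Cinf_opp; auto. Qed.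

Lemma Cinf_const c : Cinf (fun _ _ => c).
Proof. intros k; apply Ck_const. Qed.

Lemma Cinf_div g1 g2 : Cinf g1 -> Cinf g2 -> (forall u v, U u v -> g2 u v <> 0) ->
  Cinf (fun u v => g1 u v / g2 u v).
Proof. intros A B N. apply (Cinf_mult g1 (fun u v => / g2 u v)); auto. intros k; apply Ck_inv; auto. Qed.

Lemma Cinf_pd b g : Cinf g -> Cinf (pd b g).
Proof. intros A k. exact (proj2 (proj2 (A (S k))) b). Qed.

Lemma Cinf_ex_pd b g u v : Cinf g -> U u v -> ex_pd b g u v.
Proof. intros A H. exact (proj1 (proj2 (A 1%nat)) b u v H). Qed.

Lemma Cinf_of_smooth_on g : smooth_on U g -> Cinf g.
Proof.
  intros S k. revert g S. induction k as [|k IHk]; intros g S; simpl.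
  - intros u v H. apply continuity_2d_pt_filterlim, (S nil u v H).
  - split; [|split].
    + intros u v H. apply continuity_2d_pt_filterlim, (S nil u v H).
    + intros b u v H. destruct (S nil u v H) as [A [B _]]. destruct b; simpl; auto.
    + intros b. apply IHk. intros s u v H.
      replace (pdl s (pd b g)) with (pdl (s ++ b :: nil) g)
        by (unfold pdl; rewrite fold_right_app; reflexivity).
      apply S; auto.
Qed.

Lemma pd_comm b c g : Cinf g -> eq_on (pd b (pd c g)) (pd c (pd b g)).
Proof.
  intros A.
  assert (S : eq_on (pd false (pd true g)) (pd true (pd false g))).
  { intros u v H. apply Schwarz.
    - apply locally_2d_impl with U; [|apply locally_2d_open; auto].
      apply locally_2d_forall. intros x y Hxy.
      split; [exact (Cinf_ex_pd false g x y A Hxy) |].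
      split; [exact (Cinf_ex_pd true g x y A Hxy) |].
      split; [exact (Cinf_ex_pd false _ x y (Cinf_pd true g A) Hxy) |].
      exact (Cinf_ex_pd true _ x y (Cinf_pd false g A) Hxy).
    - apply (Cinf_pd false _ (Cinf_pd true _ A) O); auto.
    - apply (Cinf_pd true _ (Cinf_pd false _ A) O); auto. }
  intros u v H. destruct b, c; auto. symmetry; auto.
Qed.

Lemma ex_pd_fsum b l (F : nat -> R -> R -> R) u v :
  (forall i, In i l -> ex_pd b (F i) u v) -> ex_pd b (fun u v => fsum l (fun i => F i u v)) u v.
Proof.
  induction l as [|i l IHl]; intros H; unfold fsum in *; simpl.
  - apply ex_pd_const.
  - apply (ex_pd_plus b (F i) (fun u v => fold_right Rplus 0 (map (fun i => F i u v) l)));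
      [apply H | apply IHl; intros; apply H]; simpl; auto.
Qed.

Lemma pd_fsum b l (F : nat -> R -> R -> R) u v : (forall i, In i l -> ex_pd b (F i) u v) ->
  pd b (fun u v => fsum l (fun i => F i u v)) u v = fsum l (fun i => pd b (F i) u v).
Proof.
  induction l as [|i l IHl]; intros H; unfold fsum in *; simpl.
  - apply pd_const.
  - rewrite (pd_plus b (F i) (fun u v => fold_right Rplus 0 (map (fun i => F i u v) l))).
    + rewrite IHl; auto. intros; apply H; simpl; auto.
    + apply H; simpl; auto.
    + apply (ex_pd_fsum b l F u v). intros; apply H; simpl; auto.
Qed.

Lemma Cinf_fsum l (F : nat -> R -> R -> R) : (forall i, In i l -> Cinf (F i)) ->
  Cinf (fun u v => fsum l (fun i => F i u v)).
Proof.
  induction l as [|i l IHl]; intros H; unfold fsum in *; simpl.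
  - apply Cinf_const.
  - apply (Cinf_plus (F i) (fun u v => fold_right Rplus 0 (map (fun i => F i u v) l)));
      [apply H | apply IHl; intros; apply H]; simpl; auto.
Qed.

Lemma Cinf_mink n (X Y : nat -> R -> R -> R) :
  (forall i, (i <= n)%nat -> Cinf (X i)) -> (forall i, (i <= n)%nat -> Cinf (Y i)) ->
  Cinf (fun u v => mink n (fun i => X i u v) (fun i => Y i u v)).
Proof.
  intros HX HY. unfold mink.
  apply (Cinf_plus (fun u v => - X 0%nat u v * Y 0%nat u v)).
  - apply (Cinf_mult (fun u v => - X 0%nat u v)); [apply Cinf_opp, HX | apply HY]; lia.
  - apply (Cinf_fsum (seq 0 n) (fun i u v => X (S i) u v * Y (S i) u v)).
    intros i Hi. apply in_seq in Hi. apply Cinf_mult; [apply HX | apply HY]; lia.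
Qed.

Lemma pd_mink n b (X Y : nat -> R -> R -> R) u v :
  (forall i, (i <= n)%nat -> ex_pd b (X i) u v) -> (forall i, (i <= n)%nat -> ex_pd b (Y i) u v) ->
  pd b (fun u v => mink n (fun i => X i u v) (fun i => Y i u v)) u v =
  mink n (fun i => pd b (X i) u v) (fun i => Y i u v) + mink n (fun i => X i u v) (fun i => pd b (Y i) u v).
Proof.
  intros HX HY.
  assert (EXY : forall i, In i (seq 0 n) -> ex_pd b (fun u v => X (S i) u v * Y (S i) u v) u v).
  { intros i Hi; apply in_seq in Hi. apply ex_pd_mult; [apply HX | apply HY]; lia. }
  unfold mink.
  rewrite (pd_plus b (fun u v => - X 0%nat u v * Y 0%nat u v)).
  - rewrite (pd_mult b (fun u v => - X 0%nat u v)), pd_opp.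
    + change (fun u0 v0 => sumR (fun i => X (S i) u0 v0 * Y (S i) u0 v0) n) with
        (fun u0 v0 => fsum (seq 0 n) (fun i => (fun i u v => X (S i) u v * Y (S i) u v) i u0 v0)).
      rewrite pd_fsum by exact EXY.
      change (sumR ?F n) with (fsum (seq 0 n) F).
      rewrite (fsum_ext _ _ (fun i => 1 * (pd b (X (S i)) u v * Y (S i) u v)
                                    + 1 * (X (S i) u v * pd b (Y (S i)) u v))).
      * rewrite fsum_lin. ring.
      * intros i Hi; apply in_seq in Hi. rewrite pd_mult; [ring | apply HX | apply HY]; lia.
    + apply ex_pd_opp, HX; lia.
    + apply HY; lia.
  - apply ex_pd_mult; [apply ex_pd_opp, HX | apply HY]; lia.
  - exact (ex_pd_fsum b _ (fun i u v => X (S i) u v * Y (S i) u v) u v EXY).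
Qed.

Lemma pd_mink_const_l n b (Z : nat -> R) (X : nat -> R -> R -> R) u v :
  (forall i, (i <= n)%nat -> ex_pd b (X i) u v) ->
  pd b (fun u v => mink n Z (fun i => X i u v)) u v = mink n Z (fun i => pd b (X i) u v).
Proof.
  intros HX. rewrite (pd_mink n b (fun i _ _ => Z i) X); [| intros; apply ex_pd_const | exact HX].
  rewrite (mink_ext n (fun i => pd b (fun _ _ => Z i) u v) (fun _ => 0) _ (fun i => X i u v));
    [| intros; apply pd_const | reflexivity].
  rewrite mink_0_l. apply Rplus_0_l.
Qed.

Create HintDb cinf.

Ltac cinf := lazymatch goal with
  | |- Cinf (fun x y => @?A x y + @?B x y) => apply (Cinf_plus A B); cinf
  | |- Cinf (fun x y => @?A x y - @?B x y) => apply (Cinf_minus A B); cinf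
  | |- Cinf (fun x y => @?A x y * @?B x y) => apply (Cinf_mult A B); cinf
  | |- Cinf (fun x y => @?A x y / @?B x y) => apply (Cinf_div A B); [cinf | cinf | auto with cinf]
  | |- Cinf (fun x y => - @?A x y) => apply (Cinf_opp A); cinf
  | |- Cinf (fun x y => ?g x y) => change (Cinf g); cinf
  | |- Cinf (fun _ _ => _) => apply Cinf_const
  | |- Cinf (pd _ _) => apply Cinf_pd; cinf
  | _ => solve [auto with cinf]
  end.

Ltac ex_pd_tac := apply Cinf_ex_pd; [cinf | auto].

(** * Geometry of the surface *)

Section Surface.
Variable n : nat.
Variable f : nat -> R -> R -> R.
Hypothesis Hf : forall i, (i <= n)%nat -> smooth_on U (f i).
Hypothesis timelike : forall u v, U u v -> detg n f u v < 0.
Variable Z : nat -> R.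

Lemma detg_neq0 u v : U u v -> detg n f u v <> 0.
Proof. intros H; specialize (timelike u v H); lra. Qed.

Lemma Cinf_f i : (i <= n)%nat -> Cinf (f i).
Proof. intros; apply Cinf_of_smooth_on; auto. Qed.

Lemma Cinf_gm b c : Cinf (gm n f b c).
Proof.
  apply (Cinf_mink n (fun i => pd b (f i)) (fun i => pd c (f i))); intros; apply Cinf_pd, Cinf_f; auto.
Qed.

#[local] Hint Resolve detg_neq0 Cinf_gm : cinf.

Lemma gm_sym b c u v : gm n f b c u v = gm n f c b u v.
Proof. apply mink_sym. Qed.

Lemma mink_fd b c u v : mink n (fd f b u v) (fd f c u v) = gm n f b c u v.
Proof. reflexivity. Qed.

Lemma fdd_sym b c u v : U u v -> forall i, (i <= n)%nat -> fdd f b c u v i = fdd f c b u v i.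
Proof. intros H i Hi. apply pd_comm; auto. apply Cinf_f; auto. Qed.

Lemma pd_gm k b c u v : U u v ->
  pd k (gm n f b c) u v = mink n (fdd f b k u v) (fd f c u v) + mink n (fd f b u v) (fdd f c k u v).
Proof.
  intros H. apply (pd_mink n k (fun i => pd b (f i)) (fun i => pd c (f i)));
    intros; apply Cinf_ex_pd; auto; apply Cinf_pd, Cinf_f; auto.
Qed.

Lemma chris_mink k b c u v : U u v ->
  chris n f k b c u v = sumB (fun l => ginv n f k l u v * mink n (fdd f b c u v) (fd f l u v)).
Proof.
  intros H. unfold chris, sumB. rewrite !pd_gm by auto.
  assert (E : forall x y z, mink n (fdd f x y u v) z = mink n (fdd f y x u v) z).
  { intros. apply mink_ext; auto. intros; apply fdd_sym; auto. }
  rewrite !(mink_sym n (fd f _ u v) (fdd f _ _ u v)).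
  rewrite !(E c b), !(E false b), !(E false c), !(E true b), !(E true c).
  field.
Qed.

Definition tancoef (X : nat -> R) (b : bool) (u v : R) : R :=
  sumB (fun c => ginv n f b c u v * mink n X (fd f c u v)).

Lemma mink_tanpart_l X Y u v : mink n (tanpart n f X u v) Y =
  tancoef X false u v * mink n (fd f false u v) Y + tancoef X true u v * mink n (fd f true u v) Y.
Proof. rewrite <- mink_lin. apply mink_ext; auto. intros i _. unfold tanpart, tancoef, sumB. ring. Qed.

Lemma mink_tanpart_r X Y u v : mink n Y (tanpart n f X u v) =
  tancoef X false u v * mink n Y (fd f false u v) + tancoef X true u v * mink n Y (fd f true u v).
Proof. rewrite mink_sym, mink_tanpart_l, !(mink_sym n Y). reflexivity. Qed.

Lemma mink_normpart_l X Y u v :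
  mink n (normpart n f X u v) Y = mink n X Y - mink n (tanpart n f X u v) Y.
Proof. apply mink_sub. Qed.

Lemma mink_normpart_r X Y u v :
  mink n Y (normpart n f X u v) = mink n Y X - mink n Y (tanpart n f X u v).
Proof. rewrite mink_sym, mink_normpart_l, !(mink_sym n Y). reflexivity. Qed.

Lemma mink_tvec_l (w : bool -> R -> R -> R) Y u v :
  mink n (tvec f w u v) Y = w false u v * mink n (fd f false u v) Y + w true u v * mink n (fd f true u v) Y.
Proof. apply mink_lin. Qed.

Lemma mink_tvec (w : bool -> R -> R -> R) u v :
  mink n (tvec f w u v) (tvec f w u v) = sumB (fun b => sumB (fun c => w b u v * w c u v * gm n f b c u v)).
Proof.
  rewrite mink_tvec_l, !(mink_sym n _ (tvec f w u v)), !mink_tvec_l, !mink_fd.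
  unfold sumB. rewrite (gm_sym true false). ring.
Qed.

Definition height (u v : R) : R := mink n Z (fun i => f i u v).

Definition grad_height (b : bool) (u v : R) : R := sumB (fun c => ginv n f b c u v * pd c height u v).

Definition hess_height (b c : bool) (u v : R) : R :=
  pd c (pd b height) u v - sumB (fun k => chris n f k b c u v * pd k height u v).

Lemma pd_height b u v : U u v -> pd b height u v = mink n Z (fd f b u v).
Proof. intros H. apply pd_mink_const_l. intros; apply Cinf_ex_pd; auto; apply Cinf_f; auto. Qed.

Lemma pd_pd_height b c u v : U u v -> pd c (pd b height) u v = mink n Z (fdd f b c u v).
Proof.
  intros H.
  rewrite (pd_ext c (pd b height) (fun u v => mink n Z (fun i => pd b (f i) u v))); auto.
  - apply pd_mink_const_l. intros; apply Cinf_ex_pd; auto; apply Cinf_pd, Cinf_f; auto.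
  - intros x y Hxy. apply pd_height; auto.
Qed.

Lemma Cinf_height : Cinf height.
Proof. apply (Cinf_mink n (fun i _ _ => Z i) f); intros; [apply Cinf_const | apply Cinf_f; auto]. Qed.

Lemma tancoef_Z b u v : U u v -> tancoef Z b u v = grad_height b u v.
Proof.
  intros H. unfold tancoef, grad_height, sumB. rewrite !pd_height, !(mink_sym n Z) by auto. reflexivity.
Qed.

Lemma mink_II_normpart_Z b c u v : U u v ->
  mink n (II n f b c u v) (normpart n f Z u v) = hess_height b c u v.
Proof.
  intros H. pose proof (detg_neq0 u v H) as D. unfold II, hess_height.
  rewrite mink_normpart_l, !mink_normpart_r, !mink_tanpart_l, !mink_tanpart_r, !mink_fd.
  unfold tancoef, sumB. rewrite pd_pd_height, !pd_height, !chris_mink by auto.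
  unfold sumB. rewrite !(mink_sym n Z).
  unfold ginv, detg in *. rewrite (gm_sym true false) in *.
  field; auto.
Qed.

Lemma mink_tanpart_Z u v : U u v ->
  mink n (tanpart n f Z u v) (tanpart n f Z u v) = sumB (fun b => grad_height b u v * pd b height u v).
Proof.
  intros H. pose proof (detg_neq0 u v H) as D.
  rewrite mink_tanpart_l, !mink_tanpart_r, !mink_fd, !tancoef_Z by auto.
  unfold grad_height, sumB, ginv, detg in *. rewrite (gm_sym true false) in *.
  field; auto.
Qed.

Lemma mink_tanpart_Z_tvec (w : bool -> R -> R -> R) u v : U u v ->
  mink n (tanpart n f Z u v) (tvec f w u v) = sumB (fun c => w c u v * pd c height u v).
Proof.
  intros H. pose proof (detg_neq0 u v H) as D.
  rewrite mink_tanpart_l, !tancoef_Z, !(mink_sym n _ (tvec f w u v)), !mink_tvec_l, !mink_fd by auto.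
  unfold grad_height, sumB, ginv, detg in *. rewrite (gm_sym true false) in *.
  field; auto.
Qed.

Lemma grad_height_neq0 u v : U u v -> (exists i, (i <= n)%nat /\ tanpart n f Z u v i <> 0) ->
  grad_height false u v <> 0 \/ grad_height true u v <> 0.
Proof.
  intros H [i [Hi Ne]].
  destruct (Req_dec (grad_height false u v) 0) as [E0 | E0]; auto.
  destruct (Req_dec (grad_height true u v) 0) as [E1 | E1]; auto.
  exfalso. apply Ne.
  replace (tanpart n f Z u v i)
    with (tancoef Z false u v * fd f false u v i + tancoef Z true u v * fd f true u v i)
    by (unfold tanpart, tancoef, sumB; ring).
  rewrite !tancoef_Z, E0, E1 by auto. ring.
Qed.

Lemma Cinf_detg : Cinf (detg n f).
Proof. unfold detg. cinf. Qed.

#[local] Hint Resolve Cinf_detg Cinf_height : cinf.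

Lemma Cinf_ginv b c : Cinf (ginv n f b c).
Proof. destruct b, c; unfold ginv; cbv beta iota; cinf. Qed.

#[local] Hint Resolve Cinf_ginv : cinf.

Lemma Cinf_chris k i j : Cinf (chris n f k i j).
Proof. unfold chris, sumB. cinf. Qed.

#[local] Hint Resolve Cinf_chris : cinf.

Lemma Cinf_grad_height b : Cinf (grad_height b).
Proof. unfold grad_height, sumB. cinf. Qed.

Lemma Cinf_hess_height b c : Cinf (hess_height b c).
Proof. unfold hess_height, sumB. cinf. Qed.


#[local] Hint Resolve Cinf_grad_height Cinf_hess_height : cinf.

Lemma ginv_sym u v : ginv n f true false u v = ginv n f false true u v.
Proof. unfold ginv. rewrite (gm_sym true false). reflexivity. Qed.

Lemma pd_gm_sym k u v : U u v -> pd k (gm n f true false) u v = pd k (gm n f false true) u v.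
Proof. intros H. apply pd_ext; auto. intros x y _. apply gm_sym. Qed.

Lemma pd_pd_gm_sym k k' u v : U u v ->
  pd k' (pd k (gm n f true false)) u v = pd k' (pd k (gm n f false true)) u v.
Proof. intros H. apply pd_ext; auto. intros x y Hxy. apply pd_gm_sym; auto. Qed.

Lemma chris_sym m u v : U u v -> chris n f m true false u v = chris n f m false true u v.
Proof. intros H. unfold chris, sumB. rewrite !pd_gm_sym by auto. ring. Qed.

Lemma pd_chris_sym k m u v : U u v ->
  pd k (chris n f m true false) u v = pd k (chris n f m false true) u v.
Proof. intros H. apply pd_ext; auto. intros x y Hxy. apply chris_sym; auto. Qed.

Lemma pd_comm_gm b c u v : U u v ->
  pd true (pd false (gm n f b c)) u v = pd false (pd true (gm n f b c)) u v.
Proof. intros H. apply pd_comm; auto. cinf. Qed.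

Lemma pd_comm_height u v : U u v -> pd true (pd false height) u v = pd false (pd true height) u v.
Proof. intros H. apply pd_comm; auto. cinf. Qed.

Lemma hess_height_sym u v : U u v -> hess_height true false u v = hess_height false true u v.
Proof. intros H. unfold hess_height, sumB. rewrite pd_comm_height, !chris_sym by auto. reflexivity. Qed.

Ltac sym_norm := repeat first
  [ rewrite chris_sym by auto | rewrite ginv_sym | rewrite (gm_sym true false)
  | rewrite pd_gm_sym by auto | rewrite pd_pd_gm_sym by auto | rewrite pd_comm_gm by auto
  | rewrite pd_comm_height by auto | rewrite hess_height_sym by auto ].

Ltac sym_norm_in H := repeat first
  [ rewrite chris_sym in H by auto | rewrite pd_chris_sym in H by auto
  | rewrite (gm_sym true false) in H ].

Lemma pd_detg k u v : U u v -> pd k (detg n f) u v =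
  pd k (gm n f false false) u v * gm n f true true u v + gm n f false false u v * pd k (gm n f true true) u v
  - 2 * gm n f false true u v * pd k (gm n f false true) u v.
Proof.
  intros H. unfold detg.
  rewrite (pd_minus k (fun u v => gm n f false false u v * gm n f true true u v)) by ex_pd_tac.
  rewrite !pd_mult by ex_pd_tac. sym_norm. ring.
Qed.

Lemma pd_ginv k i j u v : U u v -> pd k (ginv n f i j) u v =
  - sumB (fun l => chris n f i k l u v * ginv n f l j u v + chris n f j k l u v * ginv n f i l u v).
Proof.
  intros H. pose proof (detg_neq0 u v H) as D.
  unfold chris, sumB. unfold ginv at 1.
  destruct i, j;
    rewrite pd_div by (ex_pd_tac || auto); rewrite ?pd_opp, pd_detg by auto;
    unfold ginv; sym_norm; unfold detg in *; rewrite !(gm_sym true false) in *; field; auto.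
Qed.

Lemma pd_grad_height k b u v : U u v -> pd k (grad_height b) u v =
  - sumB (fun l => chris n f b k l u v * grad_height l u v)
  + sumB (fun l => ginv n f b l u v * hess_height l k u v).
Proof.
  intros H. unfold grad_height at 1, sumB.
  rewrite (pd_plus k (fun u v => ginv n f b false u v * pd false height u v)) by ex_pd_tac.
  rewrite !pd_mult, !pd_ginv by (ex_pd_tac || auto).
  unfold grad_height, hess_height, sumB. destruct k, b; sym_norm; ring.
Qed.

Definition grad_height_sq (u v : R) : R := sumB (fun b => grad_height b u v * pd b height u v).


Lemma pd_grad_height_sq k u v : U u v ->
  pd k grad_height_sq u v = 2 * sumB (fun l => grad_height l u v * hess_height l k u v).
Proof.
  intros H. unfold grad_height_sq at 1, sumB.
  rewrite (pd_plus k (fun u v => grad_height false u v * pd false height u v)) by ex_pd_tac.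
  rewrite !pd_mult, !pd_grad_height by (ex_pd_tac || auto).
  unfold grad_height, hess_height, sumB. destruct k; sym_norm; ring.
Qed.

Lemma pd_chris m k i j u v : U u v -> pd m (chris n f k i j) u v =
  / 2 * sumB (fun l =>
      pd m (ginv n f k l) u v
        * (pd i (gm n f j l) u v + pd j (gm n f i l) u v - pd l (gm n f i j) u v)
      + ginv n f k l u v
        * (pd m (pd i (gm n f j l)) u v + pd m (pd j (gm n f i l)) u v - pd m (pd l (gm n f i j)) u v)).
Proof.
  intros H. unfold chris at 1, sumB.
  rewrite (pd_mult m (fun _ _ => / 2)), pd_const; [| apply ex_pd_const | ex_pd_tac].
  rewrite (pd_plus m (fun u v => ginv n f k false u v *
            (pd i (gm n f j false) u v + pd j (gm n f i false) u v - pd false (gm n f i j) u v))) by ex_pd_tac.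
  rewrite !pd_mult by ex_pd_tac.
  rewrite !(pd_minus m (fun u v => pd i (gm n f j _) u v + pd j (gm n f i _) u v)) by ex_pd_tac.
  rewrite !(pd_plus m (pd i (gm n f j _))) by ex_pd_tac.
  ring.
Qed.

(* [R(d1,d2)d1 = Rvec_d1^l d_l], the companion of [Rvec] ([R(d1,d2)d2]). *)
Definition Rvec_d1 (l : bool) (u v : R) : R :=
  pd false (chris n f l false true) u v - pd true (chris n f l false false) u v
  + sumB (fun k => chris n f k false true u v * chris n f l false k u v
                   - chris n f k false false u v * chris n f l true k u v).

Ltac curvature_skew :=
  let H := fresh in let D := fresh in
  intros H; pose proof (detg_neq0 _ _ H) as D;
  unfold Rvec_d1, Rvec, sumB; rewrite !pd_chris by auto; unfold sumB; rewrite !pd_ginv by auto;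
  unfold chris, sumB; sym_norm; unfold ginv, detg in *; sym_norm; sym_norm_in D; field; auto.

Lemma curvature_skew22 u v : U u v ->
  gm n f true false u v * Rvec n f false u v + gm n f true true u v * Rvec n f true u v = 0.
Proof. curvature_skew. Qed.

Lemma curvature_skew11 u v : U u v ->
  gm n f false false u v * Rvec_d1 false u v + gm n f false true u v * Rvec_d1 true u v = 0.
Proof. curvature_skew. Qed.

Lemma curvature_skew12 u v : U u v ->
  gm n f false true u v * Rvec_d1 false u v + gm n f true true u v * Rvec_d1 true u v =
  - (gm n f false false u v * Rvec n f false u v + gm n f false true u v * Rvec n f true u v).
Proof. curvature_skew. Qed.

Lemma pd_hess_height k i j u v : U u v -> pd k (hess_height i j) u v =
  pd k (pd j (pd i height)) u v - sumB (fun l => pd k (chris n f l i j) u v * pd l height u v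
                                             + chris n f l i j u v * pd k (pd l height) u v).
Proof.
  intros H. unfold hess_height at 1, sumB.
  rewrite (pd_minus k (pd j (pd i height))) by ex_pd_tac.
  rewrite (pd_plus k (fun u v => chris n f false i j u v * pd false height u v)) by ex_pd_tac.
  rewrite !pd_mult by ex_pd_tac. reflexivity.
Qed.

Lemma pd_comm_height_TTF u v : U u v ->
  pd true (pd true (pd false height)) u v = pd false (pd true (pd true height)) u v.
Proof.
  intros H. rewrite (pd_ext true (pd true (pd false height)) (pd false (pd true height))); auto.
  - apply pd_comm; auto. cinf.
  - intros x y Hxy. apply pd_comm_height; auto.
Qed.

Lemma pd_comm_height_TFF u v : U u v ->
  pd true (pd false (pd false height)) u v = pd false (pd false (pd true height)) u v.
Proof.
  intros H. rewrite pd_comm by (auto; cinf).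
  apply pd_ext; auto. intros x y Hxy. apply pd_comm_height; auto.
Qed.

Lemma Rvec_gaussK u v : U u v ->
  Rvec n f false u v = gaussK n f u v * gm n f true true u v /\
  Rvec n f true u v = - gaussK n f u v * gm n f false true u v.
Proof.
  intros H. pose proof (detg_neq0 u v H) as D. unfold detg in D. rewrite (gm_sym true false) in D.
  assert (E1 : gm n f false false u v * Rvec n f false u v + gm n f false true u v * Rvec n f true u v
               = gaussK n f u v * detg n f u v).
  { unfold gaussK, sumB, detg. rewrite (gm_sym true false). field; auto. }
  assert (E2 := curvature_skew22 u v H). rewrite (gm_sym true false) in E2.
  destruct (cramer2 _ _ _ _ _ _ _ D E1 E2) as [RF RT].
  rewrite RF, RT. unfold detg. rewrite (gm_sym true false). split; field; auto.
Qed.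

Lemma Rvec_d1_gaussK u v : U u v ->
  Rvec_d1 false u v = gaussK n f u v * gm n f false true u v /\
  Rvec_d1 true u v = - gaussK n f u v * gm n f false false u v.
Proof.
  intros H. pose proof (detg_neq0 u v H) as D. unfold detg in D. rewrite (gm_sym true false) in D.
  assert (E2 := curvature_skew12 u v H).
  replace (- (gm n f false false u v * Rvec n f false u v + gm n f false true u v * Rvec n f true u v))
    with (- (gaussK n f u v * detg n f u v)) in E2
    by (unfold gaussK, sumB, detg; rewrite (gm_sym true false); field; auto).
  destruct (cramer2 _ _ _ _ _ _ _ D (curvature_skew11 u v H) E2) as [SF ST].
  rewrite SF, ST. unfold detg. rewrite (gm_sym true false). split; field; auto.
Qed.

(** * The null direction *)

Section NullDirection.
Variable w : bool -> R -> R -> R.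
Hypothesis Z_tan_null : forall u v, U u v ->
  mink n (tanpart n f Z u v) (tanpart n f Z u v) = 0 /\
  exists i, (i <= n)%nat /\ tanpart n f Z u v i <> 0.
Hypothesis W_frame : forall u v, U u v ->
  mink n (tvec f w u v) (tvec f w u v) = 0 /\
  (exists i, (i <= n)%nat /\ tvec f w u v i <> 0) /\
  mink n (tanpart n f Z u v) (tvec f w u v) = -1.

Lemma grad_height_sq_0 u v : U u v -> grad_height_sq u v = 0.
Proof. intros H. unfold grad_height_sq. rewrite <- mink_tanpart_Z by auto. apply Z_tan_null; auto. Qed.

Lemma dheight_W u v : U u v -> w false u v * pd false height u v + w true u v * pd true height u v = -1.
Proof.
  intros H. change (sumB (fun c => w c u v * pd c height u v) = -1).
  rewrite <- (mink_tanpart_Z_tvec w) by auto. apply W_frame; auto.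
Qed.

Lemma dheight_neq0 u v : U u v ->
  pd false height u v * pd false height u v + pd true height u v * pd true height u v <> 0.
Proof.
  intros H N. pose proof (dheight_W u v H) as W.
  assert (pd false height u v = 0) as E0 by nra. assert (pd true height u v = 0) as E1 by nra.
  rewrite E0, E1 in W. lra.
Qed.

(* Differentiating [|grad h|^2 = 0]: the Hessian of [h] annihilates [grad h]. *)
Lemma hess_height_grad k u v : U u v ->
  grad_height false u v * hess_height false k u v + grad_height true u v * hess_height true k u v = 0.
Proof.
  intros H.
  assert (E : pd k grad_height_sq u v = pd k (fun _ _ => 0) u v).
  { apply pd_ext; auto. intros x y Hxy. apply grad_height_sq_0; auto. }
  rewrite pd_const, pd_grad_height_sq in E by auto. unfold sumB in E. lra.
Qed.

Definition hess_coef (u v : R) : R :=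
  (hess_height false false u v + hess_height true true u v) /
  (pd false height u v * pd false height u v + pd true height u v * pd true height u v).

Lemma hess_height_rank_one i j u v : U u v ->
  hess_height i j u v = hess_coef u v * pd i height u v * pd j height u v.
Proof.
  intros H. pose proof (dheight_neq0 u v H) as N.
  destruct (sym2_kernel_rank_one (grad_height false u v) (grad_height true u v)
              (pd false height u v) (pd true height u v)
              (hess_height false false u v) (hess_height false true u v) (hess_height true true u v))
    as [E1 [E2 E3]].
  - pose proof (hess_height_grad false u v H). rewrite hess_height_sym in * by auto. lra.
  - exact (hess_height_grad true u v H).
  - exact (grad_height_sq_0 u v H).
  - apply grad_height_neq0, Z_tan_null; auto.
  - unfold hess_coef. destruct i, j; rewrite ?hess_height_sym by auto;
      refine (Rmult_eq_reg_r _ _ _ _ N); rewrite ?E1, ?E2, ?E3; field; exact N.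
Qed.

Lemma Cinf_hess_coef : Cinf hess_coef.
Proof. unfold hess_coef. apply Cinf_div; [cinf | cinf | apply dheight_neq0]. Qed.

#[local] Hint Resolve Cinf_hess_coef : cinf.

Lemma a_hess_coef u v : U u v ->
  sumB (fun b => sumB (fun c => w b u v * w c u v * mink n (II n f b c u v) (normpart n f Z u v)))
  = hess_coef u v.
Proof.
  intros H. unfold sumB. rewrite !mink_II_normpart_Z, !hess_height_rank_one by auto.
  transitivity (hess_coef u v * (w false u v * pd false height u v + w true u v * pd true height u v) ^ 2);
    [ring | rewrite dheight_W by auto; ring].
Qed.

Lemma pd_hess_height_rank_one k i j u v : U u v -> pd k (hess_height i j) u v =
  pd k hess_coef u v * pd i height u v * pd j height u v
  + hess_coef u v * pd k (pd i height) u v * pd j height u v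
  + hess_coef u v * pd i height u v * pd k (pd j height) u v.
Proof.
  intros H.
  rewrite (pd_ext k (hess_height i j) (fun u v => (hess_coef u v * pd i height u v) * pd j height u v)); auto.
  - rewrite (pd_mult k (fun u v => hess_coef u v * pd i height u v) (pd j height)) by ex_pd_tac.
    rewrite (pd_mult k hess_coef (pd i height)) by ex_pd_tac. ring.
  - intros x y Hxy. apply hess_height_rank_one; auto.
Qed.

Lemma pd_pd_height_rank_one i j u v : U u v -> pd j (pd i height) u v =
  hess_coef u v * pd i height u v * pd j height u v + sumB (fun m => chris n f m i j u v * pd m height u v).
Proof. intros H. rewrite <- hess_height_rank_one by auto. unfold hess_height. ring. Qed.

(* Ricci identity for [h]: commuting [d1] past the Hessian [A dh (x) dh] gives
   [R(d1,d2)d_j . dh = - d_j h (dh /\ dA)]. *)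
Ltac ricci_height third_comm k i j k' i' j' :=
  let H := fresh in intros H;
  let e1 := fresh in let e2 := fresh in
  pose proof (pd_hess_height k i j _ _ H) as e1; rewrite pd_hess_height_rank_one in e1 by auto;
  pose proof (pd_hess_height k' i' j' _ _ H) as e2; rewrite pd_hess_height_rank_one in e2 by auto;
  rewrite third_comm in e2 by auto;
  unfold sumB in e1, e2; rewrite !pd_pd_height_rank_one in e1, e2 by auto;
  unfold Rvec, Rvec_d1, sumB in *; sym_norm; sym_norm_in e1; sym_norm_in e2;
  lra.

Lemma ricci_height_d2 u v : U u v ->
  Rvec n f false u v * pd false height u v + Rvec n f true u v * pd true height u v =
  - pd true height u v * (pd true height u v * pd false hess_coef u v - pd false height u v * pd true hess_coef u v).
Proof. ricci_height pd_comm_height_TTF false true true true false true. Qed.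

Lemma ricci_height_d1 u v : U u v ->
  Rvec_d1 false u v * pd false height u v + Rvec_d1 true u v * pd true height u v =
  - pd false height u v * (pd true height u v * pd false hess_coef u v - pd false height u v * pd true hess_coef u v).
Proof. ricci_height pd_comm_height_TFF false true false true false false. Qed.

Lemma dheight_null u v : U u v ->
  gm n f true true u v * pd false height u v * pd false height u v
  - 2 * gm n f false true u v * pd false height u v * pd true height u v
  + gm n f false false u v * pd true height u v * pd true height u v = 0.
Proof.
  intros H. pose proof (detg_neq0 u v H) as D.
  transitivity (grad_height_sq u v * detg n f u v).
  - unfold grad_height_sq, grad_height, sumB, ginv, detg in *. rewrite (gm_sym true false) in *.
    field; auto.
  - rewrite grad_height_sq_0 by auto. ring.
Qed.

Lemma gaussK_grad_hess_coef u v : U u v ->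
  gaussK n f u v = grad_height false u v * pd false hess_coef u v + grad_height true u v * pd true hess_coef u v.
Proof.
  intros H. pose proof (detg_neq0 u v H) as D.
  destruct (Rvec_gaussK u v H) as [RF RT]. destruct (Rvec_d1_gaussK u v H) as [SF ST].
  pose proof (ricci_height_d2 u v H) as R2. pose proof (ricci_height_d1 u v H) as R1.
  rewrite RF, RT in R2. rewrite SF, ST in R1.
  assert (Nh : pd false height u v <> 0 \/ pd true height u v <> 0).
  { destruct (Req_dec (pd false height u v) 0) as [E|E]; [right | left; auto].
    intro E'. pose proof (dheight_W u v H) as W. rewrite E, E' in W. lra. }
  pose proof (null_covector_scalar (gm n f false false u v) (gm n f false true u v) (gm n f true true u v)
    (pd false height u v) (pd true height u v) (pd false hess_coef u v) (pd true hess_coef u v)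
    (gaussK n f u v)) as KD.
  unfold detg in D. rewrite (gm_sym true false) in D.
  apply (Rmult_eq_reg_r (gm n f false false u v * gm n f true true u v
                        - gm n f false true u v * gm n f false true u v)); auto.
  rewrite KD; auto.
  - unfold grad_height, sumB, ginv, detg. rewrite (gm_sym true false). field; auto.
  - apply dheight_null; auto.
  - rewrite <- R2. ring.
  - rewrite <- R1. ring.
Qed.

Lemma ginv_null_frame i j u v : U u v ->
  ginv n f i j u v = - (grad_height i u v * w j u v + w i u v * grad_height j u v).
Proof.
  intros H. pose proof (detg_neq0 u v H) as D. unfold detg in D. rewrite (gm_sym true false) in D.
  pose proof (W_frame u v H) as [Wn _]. rewrite mink_tvec in Wn. unfold sumB in Wn.
  rewrite (gm_sym true false) in Wn.
  destruct (null_frame_inverse_metric (gm n f false false u v) (gm n f false true u v) (gm n f true true u v)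
    (ginv n f false false u v) (ginv n f false true u v) (ginv n f true true u v)
    (pd false height u v) (pd true height u v) (w false u v) (w true u v)) as [IFF [IFT ITT]];
    try (unfold ginv, detg; rewrite (gm_sym true false); field; auto).
  - pose proof (grad_height_sq_0 u v H) as N. unfold grad_height_sq, grad_height, sumB in N.
    rewrite ginv_sym in N. exact N.
  - lra.
  - exact (dheight_W u v H).
  - unfold grad_height, sumB. destruct i, j; rewrite ?ginv_sym;
      [rewrite ITT at 1 | rewrite IFT at 1 | rewrite IFT at 1 | rewrite IFF at 1]; ring.
Qed.

Lemma ginv_hess_height b k u v : U u v ->
  sumB (fun l => ginv n f b l u v * hess_height l k u v) = hess_coef u v * pd k height u v * grad_height b u v.
Proof. intros H. unfold sumB, grad_height. rewrite !hess_height_rank_one by auto. unfold sumB. ring. Qed.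

Lemma pd_gaussK b u v : U u v -> pd b (gaussK n f) u v =
  sumB (fun c => (- sumB (fun l => chris n f c b l u v * grad_height l u v)
                  + hess_coef u v * pd b height u v * grad_height c u v) * pd c hess_coef u v
                 + grad_height c u v * pd b (pd c hess_coef) u v).
Proof.
  intros H.
  rewrite (pd_ext b (gaussK n f) (fun u v => grad_height false u v * pd false hess_coef u v
                                           + grad_height true u v * pd true hess_coef u v)); auto.
  - rewrite (pd_plus b (fun u v => grad_height false u v * pd false hess_coef u v)) by ex_pd_tac.
    rewrite !pd_mult, !pd_grad_height, !ginv_hess_height by (ex_pd_tac || auto).
    unfold sumB. ring.
  - intros x y Hxy. apply gaussK_grad_hess_coef; auto.
Qed.

Lemma lap_ext g1 g2 u v : U u v -> eq_on g1 g2 -> lap n f g1 u v = lap n f g2 u v.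
Proof.
  intros H E. unfold lap, sumB.
  assert (E1 : forall i, eq_on (pd i g1) (pd i g2)) by (intros; apply pd_ext; auto).
  assert (E2 : forall i j, pd j (pd i g1) u v = pd j (pd i g2) u v) by (intros; apply pd_ext; auto).
  rewrite !E2, !E1 by auto. reflexivity.
Qed.

Lemma lap_a u v : U u v ->
  lap n f (fun u v => sumB (fun b => sumB (fun c =>
      w b u v * w c u v * mink n (II n f b c u v) (normpart n f Z u v)))) u v
  = -2 * gaussK n f u v * sumB (fun b => sumB (fun c =>
      w b u v * w c u v * mink n (II n f b c u v) (normpart n f Z u v)))
    - 2 * sumB (fun b => w b u v * pd b (gaussK n f) u v).
Proof.
  intros H.
  rewrite (lap_ext _ hess_coef), a_hess_coef by (auto; intros x y Hxy; apply a_hess_coef; auto).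
  unfold lap, sumB. rewrite !pd_gaussK, gaussK_grad_hess_coef by auto.
  unfold sumB. rewrite !ginv_null_frame by auto.
  sym_norm. rewrite !(pd_comm true false hess_coef) by (auto; cinf).
  apply Rminus_diag_uniq.
  transitivity (2 * hess_coef u v
    * (grad_height false u v * pd false hess_coef u v + grad_height true u v * pd true hess_coef u v)
    * (w false u v * pd false height u v + w true u v * pd true height u v + 1)).
  - ring.
  - rewrite dheight_W by auto. ring.
Qed.

End NullDirection.
End Surface.
End Calculus.

Theorem mainTheorem12
  (n : nat) (U : R -> R -> Prop) (f : nat -> R -> R -> R)
  (Z : nat -> R) (w : bool -> R -> R -> R) :
  openU U ->
  (forall i, (i <= n)%nat -> smooth_on U (f i)) ->
  (* timelike: the induced metric has signature (1,1) *)
  (forall u v, U u v -> detg n f u v < 0) ->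
  (* Z constant unit spacelike *)
  mink n Z Z = 1 ->
  (* canonical null direction: Z^T lightlike everywhere on M *)
  (forall u v, U u v ->
     mink n (tanpart n f Z u v) (tanpart n f Z u v) = 0 /\
     exists i, (i <= n)%nat /\ tanpart n f Z u v i <> 0) ->
  (* W = tvec w : lightlike tangent field with <Z^T, W> = -1 *)
  (forall u v, U u v ->
     mink n (tvec f w u v) (tvec f w u v) = 0 /\
     (exists i, (i <= n)%nat /\ tvec f w u v i <> 0) /\
     mink n (tanpart n f Z u v) (tvec f w u v) = -1) ->
  let a := fun u v =>
    sumB (fun b => sumB (fun c =>
      w b u v * w c u v * mink n (II n f b c u v) (normpart n f Z u v))) in
  let K := gaussK n f in
  (forall u v, U u v ->
     lap n f a u v = -2 * K u v * a u v - 2 * sumB (fun b => w b u v * pd b K u v))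
  /\ ((forall u v, U u v -> K u v = 0) ->
      forall u v, U u v -> lap n f a u v = 0).
Proof.
  intros HU Hf timelike _ Z_tan_null W_frame a K.
  assert (lap_a : forall u v, U u v ->
            lap n f a u v = -2 * K u v * a u v - 2 * sumB (fun b => w b u v * pd b K u v))
    by (intros u v H; exact (lap_a U HU n f Hf timelike Z w Z_tan_null W_frame u v H)).
  split; [exact lap_a |].
  intros K0 u v H. rewrite lap_a by auto.
  assert (dK0 : forall b, pd b K u v = 0).
  { intros b. rewrite (pd_ext U HU b K (fun _ _ => 0)) by auto. apply pd_const. }
  unfold sumB. rewrite !dK0, K0 by auto. ring.
Qed.
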